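(* Let $n\ge1$. The Priestley power functor $\mathfrak P\colon\mathsf{DL}\to\mathsf{PMV}_n$ is right adjoint to the distributive skeleton functor $\mathfrak S\colon\mathsf{PMV}_n\to\mathsf{DL}$.
   Context: For $n\ge 1$, the algebra $\mathbf{P\L}_n=\langle\{0,\tfrac1n,\dots,1\},\min,\max,\odot,\oplus,0,1\rangle$ has $x\odot y=\max\{0,x+y-1\}$ and $x\oplus y=\min\{1,x+y\}$. $\mathsf{PMV}_n$ is the variety it generates, and $\mathsf{DL}$ is the category of bounded distributive lattices. - Priestley duality gives $D(\mathbf L)=\mathsf{DL}(\mathbf L,\mathbf 2)$, with pointwise order and product topology, and $Dh=-\circ h$. - The distributive skeleton is $\mathfrak S(\mathbf A)=\langle\{a\in A:a\oplus a=a\},\wedge,\vee,0,1\rangle$, and $\mathfrak S h=h|_{\mathfrak S(\mathbf A)}$. - The Priestley power is $\mathfrak P(\mathbf L)=\mathbf{P\L}_n[\mathbf L]$, the set of continuous order-preserving maps from $D(\mathbf L)$ to the discrete ordered space $\langle\{0,\tfrac1n,\dots,1\},\le\rangle$, with pointwise operations. It is a $\mathsf{PMV}_n$-algebra. - For a lattice homomorphism $h\colon\mathbf L_1\to\mathbf L_2$, $\mathfrak P h\colon\mathfrak P(\mathbf L_1)\to\mathfrak P(\mathbf L_2)$ is $\alpha\mapsto\alpha\circ Dh$. *)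

From mathcomp Require Import all_boot.
From mathcomp Require Import zify.
From Stdlib Require List.

Set Implicit Arguments.
Unset Strict Implicit.
Unset Printing Implicit Defensive.

Inductive term : Type :=
  | tVar of nat
  | tMin of term & term
  | tMax of term & term
  | tOdot of term & term
  | tOplus of term & term
  | tZero
  | tOne.

Section Eval.
Variables (T : Type) (mn mx od op : T -> T -> T) (z o : T) (v : nat -> T).
Fixpoint teval (t : term) : T :=
  match t with
  | tVar i => v i
  | tMin a b => mn (teval a) (teval b)
  | tMax a b => mx (teval a) (teval b)
  | tOdot a b => od (teval a) (teval b)
  | tOplus a b => op (teval a) (teval b)
  | tZero => z
  | tOne => o
  end.
End Eval.

(* The algebra PL_n: the element k : 'I_n.+1 represents k/n.           *)
Definition pl_min n (x y : 'I_n.+1) : 'I_n.+1 := inord (minn x y).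
Definition pl_max n (x y : 'I_n.+1) : 'I_n.+1 := inord (maxn x y).
(* x (.) y = max(0, x + y - 1)  ~  (k + l - n) truncated *)
Definition pl_odot n (x y : 'I_n.+1) : 'I_n.+1 := inord (x + y - n).
(* x (+) y = min(1, x + y)      ~  min(n, k + l) *)
Definition pl_oplus n (x y : 'I_n.+1) : 'I_n.+1 := inord (minn n (x + y)).
Definition pl_zero n : 'I_n.+1 := ord0.
Definition pl_one n : 'I_n.+1 := ord_max.

Definition pl_eval n (v : nat -> 'I_n.+1) (t : term) : 'I_n.+1 :=
  teval (@pl_min n) (@pl_max n) (@pl_odot n) (@pl_oplus n)
        (@pl_zero n) (@pl_one n) v t.

(* PMV_n = the variety generated by PL_n, i.e. (Birkhoff) the class of *)
(* algebras of the same signature satisfying every identity of PL_n.   *)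
Record pmv (n : nat) := PMV {
  pcar :> Type;
  pmin : pcar -> pcar -> pcar;
  pmax : pcar -> pcar -> pcar;
  podot : pcar -> pcar -> pcar;
  poplus : pcar -> pcar -> pcar;
  pzero : pcar;
  pone : pcar;
  pmv_ax : forall t1 t2 : term,
    (forall v : nat -> 'I_n.+1, pl_eval v t1 = pl_eval v t2) ->
    forall v : nat -> pcar,
      teval pmin pmax podot poplus pzero pone v t1 =
      teval pmin pmax podot poplus pzero pone v t2 }.

Arguments pmin {n A} : rename.
Arguments pmax {n A} : rename.
Arguments podot {n A} : rename.
Arguments poplus {n A} : rename.
Arguments pzero {n A} : rename.
Arguments pone {n A} : rename.

Record is_pmvhom n (A B : pmv n) (g : A -> B) : Prop := {
  pmvhom_min : forall a b, g (pmin a b) = pmin (g a) (g b);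
  pmvhom_max : forall a b, g (pmax a b) = pmax (g a) (g b);
  pmvhom_odot : forall a b, g (podot a b) = podot (g a) (g b);
  pmvhom_oplus : forall a b, g (poplus a b) = poplus (g a) (g b);
  pmvhom_zero : g pzero = pzero;
  pmvhom_one : g pone = pone }.

Record dl := DL {
  lcar :> Type;
  lmeet : lcar -> lcar -> lcar;
  ljoin : lcar -> lcar -> lcar;
  lbot : lcar;
  ltop : lcar;
  lmeetC : forall x y, lmeet x y = lmeet y x;
  ljoinC : forall x y, ljoin x y = ljoin y x;
  lmeetA : forall x y z, lmeet x (lmeet y z) = lmeet (lmeet x y) z;
  ljoinA : forall x y z, ljoin x (ljoin y z) = ljoin (ljoin x y) z;
  lmeetKJ : forall x y, lmeet x (ljoin x y) = x;
  ljoinKM : forall x y, ljoin x (lmeet x y) = x;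
  lmeetDr : forall x y z, lmeet x (ljoin y z) = ljoin (lmeet x y) (lmeet x z);
  ljoin0 : forall x, ljoin lbot x = x;
  lmeet1 : forall x, lmeet ltop x = x }.

Arguments lmeet {L} : rename.
Arguments ljoin {L} : rename.
Arguments lbot {L} : rename.
Arguments ltop {L} : rename.

Record is_dlhom (L L' : dl) (f : L -> L') : Prop := {
  dlhom_meet : forall x y, f (lmeet x y) = lmeet (f x) (f y);
  dlhom_join : forall x y, f (ljoin x y) = ljoin (f x) (f y);
  dlhom_bot : f lbot = lbot;
  dlhom_top : f ltop = ltop }.

Definition bool_dl : dl.
Proof.
refine (@DL bool andb orb false true _ _ _ _ _ _ _ _ _);
  by repeat case.
Defined.

(* Priestley dual D(L) = DL(L, 2), pointwise order, product topology   *)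
Definition dual (L : dl) := {x : L -> bool_dl | is_dlhom x}.

Definition dual_le (L : dl) (x y : dual L) : Prop :=
  forall l : L, (sval x l ==> sval y l).

(* Open sets of D(L) as a subspace of the product space 2^L:
   U is open iff each of its points has a basic neighbourhood
   (determined by finitely many coordinates) contained in U. *)
Definition dual_open (L : dl) (U : dual L -> Prop) : Prop :=
  forall x, U x -> exists F : seq L,
    forall y : dual L, (forall l, List.In l F -> sval y l = sval x l) -> U y.

(* Continuity into the discrete space {0, 1/n, ..., 1}. *)
Definition dual_continuous (L : dl) n (alpha : dual L -> 'I_n.+1) : Prop :=
  forall V : 'I_n.+1 -> Prop, dual_open (fun x => V (alpha x)).

Definition dual_monotone (L : dl) n (alpha : dual L -> 'I_n.+1) : Prop :=
  forall x y, dual_le x y -> (alpha x <= alpha y)%N.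

Definition in_ppower n (L : dl) (alpha : dual L -> 'I_n.+1) : Prop :=
  dual_continuous alpha /\ dual_monotone alpha.

Definition dual_map (L L' : dl) (f : L -> L') (hf : is_dlhom f)
  (x : dual L') : dual L.
Proof.
exists (fun l => sval x (f l)).
case: x => x [hm hj hb ht]; case: hf => fm fj fb ft.
split => /= [a b|a b||]; by rewrite ?fm ?fj ?fb ?ft ?hm ?hj ?hb ?ht.
Defined.

Record is_phom n (A : pmv n) (L : dl) (phi : A -> dual L -> 'I_n.+1) : Prop := {
  phom_in : forall a, in_ppower (phi a);
  phom_min : forall a b x, phi (pmin a b) x = pl_min (phi a x) (phi b x);
  phom_max : forall a b x, phi (pmax a b) x = pl_max (phi a x) (phi b x);
  phom_odot : forall a b x, phi (podot a b) x = pl_odot (phi a x) (phi b x);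
  phom_oplus : forall a b x, phi (poplus a b) x = pl_oplus (phi a x) (phi b x);
  phom_zero : forall x, phi pzero x = pl_zero n;
  phom_one : forall x, phi pone x = pl_one n }.

Definition skel n (A : pmv n) := {a : A | poplus a a = a}.

Section Skel.
Variables (n : nat) (A : pmv n).

Let env (a b : A) : nat -> A := fun i => if i is 0 then a else b.

Lemma skel_min_closed (a b : A) :
  poplus a a = a -> poplus b b = b -> poplus (pmin a b) (pmin a b) = pmin a b.
Proof.
move=> ha hb.
have := @pmv_ax n A
  (tOplus (tMin (tVar 0) (tVar 1)) (tMin (tVar 0) (tVar 1)))
  (tMin (tOplus (tVar 0) (tVar 0)) (tOplus (tVar 1) (tVar 1))).
move=> /(_ _ (env a b)) /= ->; first by rewrite ha hb.
move=> v /=; apply: val_inj => /=.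
rewrite /pl_oplus /pl_min.
have Hx := ltn_ord (v 0); have Hy := ltn_ord (v 1).
rewrite !inordK; lia.
Qed.

Lemma skel_max_closed (a b : A) :
  poplus a a = a -> poplus b b = b -> poplus (pmax a b) (pmax a b) = pmax a b.
Proof.
move=> ha hb.
have := @pmv_ax n A
  (tOplus (tMax (tVar 0) (tVar 1)) (tMax (tVar 0) (tVar 1)))
  (tMax (tOplus (tVar 0) (tVar 0)) (tOplus (tVar 1) (tVar 1))).
move=> /(_ _ (env a b)) /= ->; first by rewrite ha hb.
move=> v /=; apply: val_inj => /=.
rewrite /pl_oplus /pl_max.
have Hx := ltn_ord (v 0); have Hy := ltn_ord (v 1).
rewrite !inordK; lia.
Qed.

Lemma skel_zero_closed : poplus (@pzero n A) pzero = pzero.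
Proof.
have := @pmv_ax n A (tOplus tZero tZero) tZero.
move=> /(_ _ (env pzero pzero)) /= -> // v /=; apply: val_inj => /=.
rewrite /pl_oplus /pl_zero /= inordK //; lia.
Qed.

Lemma skel_one_closed : poplus (@pone n A) pone = pone.
Proof.
have := @pmv_ax n A (tOplus tOne tOne) tOne.
move=> /(_ _ (env pone pone)) /= -> // v /=; apply: val_inj => /=.
rewrite /pl_oplus /pl_one /= inordK //; lia.
Qed.

Definition skel_meet (s t : skel A) : skel A :=
  exist _ (pmin (sval s) (sval t)) (skel_min_closed (svalP s) (svalP t)).
Definition skel_join (s t : skel A) : skel A :=
  exist _ (pmax (sval s) (sval t)) (skel_max_closed (svalP s) (svalP t)).
Definition skel_bot : skel A := exist _ pzero skel_zero_closed.
Definition skel_top : skel A := exist _ pone skel_one_closed.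

End Skel.

Record is_skelhom n (A : pmv n) (L : dl) (h : skel A -> L) : Prop := {
  skelhom_meet : forall s t, h (skel_meet s t) = lmeet (h s) (h t);
  skelhom_join : forall s t, h (skel_join s t) = ljoin (h s) (h t);
  skelhom_bot : h (skel_bot A) = lbot;
  skelhom_top : h (skel_top A) = ltop }.

Definition skel_map n (A A' : pmv n) (g : A' -> A) (hg : is_pmvhom g)
  (s : skel A') : skel A.
Proof.
exists (g (sval s)).
by rewrite -(pmvhom_oplus hg) (svalP s).
Defined.

(* The cuts [cut j a] of an element [a] of a PMV_n-algebra [A] are the values
   at [a] of unary terms whose value in PL_n at [u] is [1] if [u >= j/n] and
   [0] otherwise.  They lie in the skeleton, decrease in [j], and PL_n-identities
   express the cuts of [min a b], [max a b], [a (.) b], [a (+) b] through those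
   of [a] and [b].  Hence a lattice homomorphism [h : S(A) -> L] yields, at each
   point [x] of D(L), the PMV_n-homomorphism [A -> PL_n] sending [a] to [j/n]
   for the largest [j] with [x (h (cut j a)) = 1]; as a function of [x] it is
   monotone and depends on finitely many coordinates, so it lies in P(L).
   Conversely a homomorphism [phi : A -> P(L)] sends a skeleton element to a
   {0,1}-valued continuous monotone map, i.e. a clopen up-set of D(L), which by
   Priestley duality is [{x | x l = 1}] for a unique [l] in [L].  The prime
   filter theorem and the compactness of D(L) behind this both come from one
   application of Zorn's lemma: a finitely satisfiable set of boolean
   constraints extends to a total assignment. *)

From mathcomp Require Import all_boot zify.
From mathcomp Require Import boolp classical_sets.
From Stdlib Require Import ClassicalEpsilon.

Set Implicit Arguments.
Unset Strict Implicit.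
Unset Printing Implicit Defensive.

(** * Step terms in PL_n *)

Section PL.
Variable n : nat.
Implicit Types (u v : 'I_n.+1).

Definition PL : pmv n :=
  @PMV n 'I_n.+1 (@pl_min n) (@pl_max n) (@pl_odot n) (@pl_oplus n)
    (pl_zero n) (pl_one n) (fun t1 t2 e (v : nat -> 'I_n.+1) => e v).

Lemma pl_minE u v : pl_min u v = minn u v :> nat.
Proof. by rewrite /pl_min inordK // ltnS geq_min leq_ord. Qed.

Lemma pl_maxE u v : pl_max u v = maxn u v :> nat.
Proof. by rewrite /pl_max inordK // ltnS geq_max !leq_ord. Qed.

Lemma pl_odotE u v : pl_odot u v = u + v - n :> nat.
Proof. by rewrite /pl_odot inordK // ltnS leq_subLR (leq_add (leq_ord u) (leq_ord v)). Qed.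

Lemma pl_oplusE u v : pl_oplus u v = minn n (u + v) :> nat.
Proof. by rewrite /pl_oplus inordK // ltnS geq_minl. Qed.

Lemma ord_max_geq u : (u == ord_max) = (n <= u).
Proof. by rewrite -val_eqE eqn_leq leq_ord. Qed.
End PL.

Fixpoint dyadic_term (K b : nat) (t : term) : term :=
  if K is K'.+1 then
    let s := dyadic_term K' b./2 t in if odd b then tOdot s s else tOplus s s
  else t.

Lemma pl_dyadicE n (w : nat -> 'I_n.+1) K b t : b < 2 ^ K ->
  pl_eval w (dyadic_term K b t) = minn n (2 ^ K * pl_eval w t - b * n) :> nat.
Proof.
elim: K b => [|K IH] b /= hb.
  by move: hb; rewrite expn0 ltnS leqn0 => /eqP ->; rewrite mul1n subn0 (minn_idPr (leq_ord _)).
have Eb := odd_double_half b.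
have /IH E : b./2 < 2 ^ K by move: hb; rewrite expnS -{1}Eb; case: (odd b) => /=; lia.
rewrite expnS -mulnA; set X := 2 ^ K * _ in E *; set Y := b./2 in E Eb *.
by case: (odd b) Eb => Eb; rewrite /pl_eval /= -/(pl_eval w _) ?pl_odotE ?pl_oplusE E; lia.
Qed.

(* The least [b] with [b n >= 2^(n+1) (j-1)]: then [2^(n+1) u - b n] is [<= 0]
   for [u < j] and [>= n] for [u >= j]. *)
Definition threshold n j := (2 ^ n.+1 * j.-1 + n.-1) %/ n.

Definition step_term n (j : nat) t :=
  if j == 0 then tOne else if n < j then tZero
  else dyadic_term n.+1 (threshold n j) t.

Lemma threshold_spec n j : 0 < j <= n ->
  2 ^ n.+1 * j.-1 <= threshold n j * n /\ threshold n j * n + n <= 2 ^ n.+1 * j.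
Proof.
case: j => // j /= jn; rewrite /threshold mulnS.
have n0 : 0 < n by lia.
have lo := ltn_ceil (2 ^ n.+1 * j + n.-1) n0.
have hi := leq_divM (2 ^ n.+1 * j + n.-1) n.
have Mn : n.*2 <= 2 ^ n.+1 by rewrite expnS mul2n leq_double ltnW // ltn_expl.
move: lo hi; rewrite mulSn; set B := _ %/ n * n; set P := 2 ^ n.+1 * j; clearbody B P; lia.
Qed.

Lemma pl_stepE n (w : nat -> 'I_n.+1) j t :
  pl_eval w (step_term n j t) = if j <= pl_eval w t then ord_max else ord0.
Proof.
apply: ord_inj; rewrite /step_term.
have u_le := leq_ord (pl_eval w t).
case: ifP => [/eqP -> //|/negbT j0]; case: ifP => [nj|/negbT jn].
  by rewrite leqNgt (leq_ltn_trans u_le nj).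
have n0 : 0 < n by lia.
have /threshold_spec [lo hi] : 0 < j <= n by lia.
have Mj : 2 ^ n.+1 * j <= 2 ^ n.+1 * n by rewrite leq_mul2l; lia.
have b_lt : threshold n j < 2 ^ n.+1.
  by rewrite -(ltn_pmul2r n0); move: hi Mj; set B := _ * n; clearbody B; lia.
rewrite pl_dyadicE //; move: lo hi; set B := _ * n; clearbody B => lo hi.
case: (leqP j (pl_eval w t)) => ju /=.
  suff : 2 ^ n.+1 * j <= 2 ^ n.+1 * pl_eval w t by lia.
  by rewrite leq_mul2l ju orbT.
suff : 2 ^ n.+1 * pl_eval w t <= 2 ^ n.+1 * j.-1 by lia.
by rewrite leq_mul2l -ltnS prednK ?ju ?orbT //; lia.
Qed.

(** * Cuts in PMV_n-algebras *)

Section Substitution.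
Variables (T : Type) (mn mx od op : T -> T -> T) (z o : T).
Notation eval := (teval mn mx od op z o).

Lemma teval_dyadic v K b t :
  eval v (dyadic_term K b t) = eval (fun _ => eval v t) (dyadic_term K b (tVar 0)).
Proof. by elim: K b => [|K IH] b //=; case: (odd b); rewrite /= IH. Qed.

Lemma teval_step n v j t :
  eval v (step_term n j t) = eval (fun _ => eval v t) (step_term n j (tVar 0)).
Proof. by rewrite /step_term; case: (j == 0); case: (n < j); rewrite // teval_dyadic. Qed.
End Substitution.

Section Cuts.
Variables (n : nat) (A : pmv n).
Implicit Types (a b : A).
Notation eval := (teval (@pmin n A) pmax podot poplus pzero pone).

Definition cut (j : nat) a : A := eval (fun _ => a) (step_term n j (tVar 0)).

Lemma teval_step_cut v j t : eval v (step_term n j t) = cut j (eval v t).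
Proof. exact: teval_step. Qed.

Lemma cut_gt j a : n < j -> cut j a = pzero.
Proof. by case: j => // j nj; rewrite /cut /step_term /= nj. Qed.

End Cuts.

Lemma pmvhom_teval n (A B : pmv n) (g : A -> B) : is_pmvhom g -> forall v t,
  g (teval pmin pmax podot poplus pzero pone v t)
  = teval pmin pmax podot poplus pzero pone (fun i => g (v i)) t.
Proof.
case=> gmin gmax godot goplus gzero gone v t.
by elim: t => [i|t1 IH1 t2 IH2|t1 IH1 t2 IH2|t1 IH1 t2 IH2|t1 IH1 t2 IH2||] /=;
  rewrite ?gmin ?gmax ?godot ?goplus ?gzero ?gone ?IH1 ?IH2.
Qed.

Lemma pmvhom_cut n (A B : pmv n) (g : A -> B) :
  is_pmvhom g -> forall j a, g (cut j a) = cut j (g a).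
Proof. by move=> hg j a; apply: pmvhom_teval. Qed.

Lemma cut_PL n j (u : PL n) : cut j u = if j <= u then ord_max else ord0.
Proof. exact: pl_stepE. Qed.

Definition pair_env T (a b : T) : nat -> T := fun i => if i is 0 then a else b.

(* Proves an identity of [PL_n] between terms built from step terms and the
   basic operations in at most two variables: case analysis on the steps,
   then linear arithmetic. *)
Ltac pl_identity :=
  let w := fresh "w" in
  move=> w; rewrite /pl_eval /= -!/(pl_eval w _) ?pl_stepE //=;
  rewrite /pl_eval /= -!/(pl_eval w _); apply: ord_inj;
  rewrite ?(pl_minE, pl_maxE, pl_odotE, pl_oplusE);
  have := leq_ord (w 0); have := leq_ord (w 1);
  repeat match goal with |- context [if ?c then _ else _] => case: (boolP c) end;
  rewrite /=; lia.

Ltac transfer_identity t1 t2 v :=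
  have := fun e => @pmv_ax _ _ t1 t2 e v; rewrite /= ?teval_step_cut /=; apply;
  pl_identity.

Section CutIdentities.
Variables (n : nat) (A : pmv n).
Implicit Types (a b : A).

Definition pmv_le a b := pmin a b = a.

Notation step j t := (step_term n j t).
Notation x0 := (tVar 0).
Notation x1 := (tVar 1).

Lemma cut_min j a b : cut j (pmin a b) = pmin (cut j a) (cut j b).
Proof.
transfer_identity (step j (tMin x0 x1)) (tMin (step j x0) (step j x1)) (pair_env a b).
Qed.

Lemma cut_max j a b : cut j (pmax a b) = pmax (cut j a) (cut j b).
Proof.
transfer_identity (step j (tMax x0 x1)) (tMax (step j x0) (step j x1)) (pair_env a b).
Qed.

Lemma cut_oplus_idem j a : poplus (cut j a) (cut j a) = cut j a.
Proof. transfer_identity (tOplus (step j x0) (step j x0)) (step j x0) (pair_env a a). Qed.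

Lemma cut_antitone i j a : i <= j -> pmv_le (cut j a) (cut i a).
Proof.
move=> ij; transfer_identity (tMin (step j x0) (step i x0)) (step j x0) (pair_env a a).
Qed.

Lemma cut_odot_lower j p q a b : j + n <= p + q ->
  pmv_le (pmin (cut p a) (cut q b)) (cut j (podot a b)).
Proof.
move=> h; transfer_identity (tMin (tMin (step p x0) (step q x1)) (step j (tOdot x0 x1)))
  (tMin (step p x0) (step q x1)) (pair_env a b).
Qed.

Lemma cut_odot_upper j p q a b : 0 < j -> p + q <= n + j + 1 ->
  pmv_le (cut j (podot a b)) (pmax (cut p a) (cut q b)).
Proof.
move=> j0 h; transfer_identity (tMin (step j (tOdot x0 x1)) (tMax (step p x0) (step q x1)))
  (step j (tOdot x0 x1)) (pair_env a b).
Qed.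

Lemma cut_oplus_lower j p q a b : j <= n -> j <= p + q ->
  pmv_le (pmin (cut p a) (cut q b)) (cut j (poplus a b)).
Proof.
move=> jn h; transfer_identity (tMin (tMin (step p x0) (step q x1)) (step j (tOplus x0 x1)))
  (tMin (step p x0) (step q x1)) (pair_env a b).
Qed.

Lemma cut_oplus_upper j p q a b : 0 < j -> p + q <= j + 1 ->
  pmv_le (cut j (poplus a b)) (pmax (cut p a) (cut q b)).
Proof.
move=> j0 h; transfer_identity (tMin (step j (tOplus x0 x1)) (tMax (step p x0) (step q x1)))
  (step j (tOplus x0 x1)) (pair_env a b).
Qed.

(* Idempotent elements are the [n]-fold doubles [min(1, 2^n x)], and the
   latter only take the values [0] and [1] in [PL_n]. *)
Lemma cut_fix_idem j a : poplus a a = a -> 0 < j <= n -> cut j a = a.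
Proof.
move=> aa /andP[j0 jn].
have dbl K : teval pmin pmax podot poplus pzero pone (fun _ => a) (dyadic_term K 0 x0) = a.
  by elim: K => //= K ->.
rewrite -(dbl n).
have := fun e => @pmv_ax _ _ (step j (dyadic_term n 0 x0)) (dyadic_term n 0 x0) e (fun _ => a).
rewrite /= teval_step_cut; apply=> w; apply: ord_inj.
rewrite pl_stepE // fun_if pl_dyadicE ?expn_gt0 // mul0n subn0 /=.
have n_lt : n < 2 ^ n := ltn_expl n (isT : 1 < 2).
case: (posnP (w 0)) => [->|w0]; first by rewrite muln0 minn0 leqn0 (negbTE (lt0n_neq0 j0)).
have : 2 ^ n <= 2 ^ n * w 0 by rewrite leq_pmulr.
by move=> ?; rewrite (minn_idPl _) ?jn //; lia.
Qed.

End CutIdentities.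

(** * Priestley duality *)

Section MaximalAssignment.
Local Open Scope classical_set_scope.
Variables (X : Type) (P : seq (X * bool) -> Prop).
Hypothesis P_incl : forall s t, List.incl s t -> P t -> P s.
Hypothesis P_ext : forall s a, P s -> P ((a, true) :: s) \/ P ((a, false) :: s).
Hypothesis P_contra : forall a, ~ P [:: (a, true); (a, false)].

Definition agrees (g : X -> bool) (s : seq (X * bool)) :=
  forall p, List.In p s -> g p.1 = p.2.

Definition finitely_P (M : set (X * bool)) :=
  forall s, (forall p, List.In p s -> M p) -> P s.

Lemma finitely_P_bigcup (S0 : set (X * bool)) (F : set (set (X * bool))) :
  finitely_P S0 -> (forall B, F B -> finitely_P (B `|` S0)) -> total_on F subset ->
  finitely_P ((\bigcup_(B in F) B) `|` S0).
Proof.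
move=> PS0 PF Ftot s sF.
have [B [FB sB]] : exists B, (B = set0 \/ F B) /\ forall p, List.In p s -> (B `|` S0) p.
  elim: s sF => [|x s IH] xs; first by exists set0; split; [left|].
  have [B [FB sB]] := IH (fun p ps => xs p (or_intror ps)).
  have sB' C : B `<=` C -> forall p, List.In p s -> (C `|` S0) p.
    by move=> BC p /sB [/BC|]; [left|right].
  case: (xs x (or_introl erefl)) => [[C FC Cx]|S0x].
  - have [BC|CB] : B `<=` C \/ C `<=` B.
      by case: FB => [->|FB]; [left; exact: sub0set|exact: Ftot].
    + by exists C; split; [right|move=> p [<-|/(sB' _ BC)]; [left|]].
    + by exists B; split=> // p [<-|/sB]; [left; exact: CB|].
  - by exists B; split=> // p [<-|/sB]; [right|].
case: FB => [B0|FB]; last exact: PF FB _ sB.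
by apply: PS0 => p /sB; rewrite B0 => -[].
Qed.

Lemma incl_cons_split (M : set (X * bool)) q s :
  (forall p, List.In p s -> M p \/ p = q) ->
  exists2 t, (forall p, List.In p t -> M p) & List.incl s (q :: t).
Proof.
elim: s => [|x s IH] xs; first by exists [::].
have [t tM st] := IH (fun p ps => xs p (or_intror ps)).
case: (xs x (or_introl erefl)) => [Mx|->].
- exists (x :: t); first by move=> p [<-|/tM].
  by move=> p [<-|/st [->|pt]]; [right; left|left|right; right].
- by exists t => // p [<-|/st]; [left|].
Qed.

Lemma maximal_assignment (S0 : set (X * bool)) : finitely_P S0 ->
  exists g : X -> bool,
    (forall p, S0 p -> g p.1 = p.2) /\ forall s, agrees g s -> P s.
Proof.
move=> PS0.
have [A [PA Amax]] := Zorn_bigcup (fun F FP Ftot => finitely_P_bigcup PS0 FP Ftot).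
pose M := A `|` S0.
have Mext a b : ~ M (a, b) ->
    exists2 t, (forall p, List.In p t -> M p) & ~ P ((a, b) :: t).
  move=> nM; have /existsNP[s /not_implyP[sM nPs]] : ~ finitely_P ((A `|` [set (a, b)]) `|` S0).
    apply: Amax; split; first exact: subsetUl.
    by move=> /(_ (a, b) (or_intror erefl)) Aab; apply: nM; left.
  have [|t tM st] := @incl_cons_split M (a, b) s.
    by move=> p /sM [[Ap|->]|S0p]; [left; left|right|left; right].
  by exists t => // /(P_incl st).
have Mtot a : M (a, true) \/ M (a, false).
  apply: contrapT => /not_orP[/Mext[t1 t1M nP1] /Mext[t2 t2M nP2]].
  have : P (t1 ++ t2) by apply: (PA) => p /(List.in_app_or t1 t2)[/t1M|/t2M].
  move=> /(P_ext a)[] Pat.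
  - apply: nP1; apply: P_incl Pat => p [<-|pt]; first by left.
    by right; apply: List.in_or_app; left.
  - apply: nP2; apply: P_incl Pat => p [<-|pt]; first by left.
    by right; apply: List.in_or_app; right.
pose g a := `[< M (a, true) >].
have gM p : M p -> g p.1 = p.2.
  case: p => a [] Mp; first exact: asboolT.
  apply: asboolF => Mt; apply: (P_contra (a := a)).
  by apply: (PA) => p [<-|[<-|[]]].
exists g; split=> [p S0p|s gs]; first by apply: gM; right.
apply: (PA) => -[a b] /gs /= <-; rewrite /g.
by case: (boolP `[< M (a, true) >]) => [/asboolP|/asboolPn nM]; last by case: (Mtot a).
Qed.

End MaximalAssignment.

Section Lattice.
Variable L : dl.
Implicit Types (a b c : L) (s t : seq (L * bool)).

Definition lle a b := lmeet a b = a.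

Lemma lmeetxx a : lmeet a a = a.
Proof. by rewrite -{2}(ljoinKM a a) lmeetKJ. Qed.

Lemma lmeet1r a : lmeet a ltop = a.
Proof. by rewrite lmeetC lmeet1. Qed.

Lemma ljoin0r a : ljoin a lbot = a.
Proof. by rewrite ljoinC ljoin0. Qed.

Lemma lle_joinE a b : lle a b <-> ljoin a b = b.
Proof.
split=> h; first by rewrite -h ljoinC lmeetC ljoinKM.
by rewrite /lle -h lmeetKJ.
Qed.

Lemma lle_refl a : lle a a.
Proof. exact: lmeetxx. Qed.

Lemma lle_trans a b c : lle a b -> lle b c -> lle a c.
Proof. by rewrite /lle => ab bc; rewrite -ab -lmeetA bc. Qed.

Lemma lle_anti a b : lle a b -> lle b a -> a = b.
Proof. by rewrite /lle => ab ba; rewrite -ab lmeetC ba. Qed.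

Lemma lle_meetl a b : lle (lmeet a b) a.
Proof. by rewrite /lle lmeetC lmeetA lmeetxx. Qed.

Lemma lle_meetr a b : lle (lmeet a b) b.
Proof. by rewrite /lle -lmeetA lmeetxx. Qed.

Lemma lle_meet c a b : lle c a -> lle c b -> lle c (lmeet a b).
Proof. by rewrite /lle => ca cb; rewrite lmeetA ca cb. Qed.

Lemma lle_joinl a b : lle a (ljoin a b).
Proof. exact: lmeetKJ. Qed.

Lemma lle_joinr a b : lle b (ljoin a b).
Proof. by rewrite ljoinC; apply: lmeetKJ. Qed.

Lemma lle_join a b c : lle a c -> lle b c -> lle (ljoin a b) c.
Proof. by move=> /lle_joinE ac /lle_joinE bc; apply/lle_joinE; rewrite -ljoinA bc ac. Qed.

Lemma lle_top a : lle a ltop.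
Proof. exact: lmeet1r. Qed.

(* A list of pairs [(a, b)] encodes the constraints "[a] holds iff [b]". *)
Definition pos s := foldr (fun p m => if p.2 then lmeet p.1 m else m) ltop s.
Definition neg s := foldr (fun p m => if p.2 then m else ljoin p.1 m) lbot s.

Lemma pos_in a s : List.In (a, true) s -> lle (pos s) a.
Proof.
elim: s => [|[c b] s IH] //= [[-> ->]|/IH ps]; first exact: lle_meetl.
by case: b => //; apply: lle_trans (lle_meetr _ _) ps.
Qed.

Lemma neg_in a s : List.In (a, false) s -> lle a (neg s).
Proof.
elim: s => [|[c b] s IH] //= [[-> ->]|/IH ps]; first exact: lle_joinl.
by case: b => //; apply: lle_trans ps (lle_joinr _ _).
Qed.

Lemma pos_greatest c s : (forall a, List.In (a, true) s -> lle c a) -> lle c (pos s).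
Proof.
elim: s => [|[a b] s IH] cs /=; first exact: lle_top.
have {}IH := IH (fun a' h => cs a' (or_intror h)).
by case: b cs => // cs; apply: lle_meet => //; apply: cs; left.
Qed.

Lemma neg_least c s : (forall a, List.In (a, false) s -> lle a c) -> lle (neg s) c.
Proof.
elim: s => [|[a b] s IH] cs /=; first by apply/lle_joinE; rewrite ljoin0.
have {}IH := IH (fun a' h => cs a' (or_intror h)).
by case: b cs => // cs; apply: lle_join => //; apply: cs; left.
Qed.

Lemma pos_incl s t : List.incl s t -> lle (pos t) (pos s).
Proof. by move=> st; apply: pos_greatest => a /st; apply: pos_in. Qed.

Lemma neg_incl s t : List.incl s t -> lle (neg s) (neg t).
Proof. by move=> st; apply: neg_least => a /st; apply: neg_in. Qed.

Definition consistent s := ~ lle (pos s) (neg s).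

Lemma consistent_incl s t : List.incl s t -> consistent t -> consistent s.
Proof.
move=> st ct le_s; apply: ct.
exact: lle_trans (pos_incl st) (lle_trans le_s (neg_incl st)).
Qed.

Lemma consistent_ext s a :
  consistent s -> consistent ((a, true) :: s) \/ consistent ((a, false) :: s).
Proof.
move=> cs; apply: contrapT => /not_orP[/contrapT /= le_t /contrapT /= le_f].
apply: cs; rewrite -le_f lmeetDr; apply: lle_join; last exact: lle_meetr.
by rewrite lmeetC.
Qed.

Lemma inconsistent_pair a : ~ consistent [:: (a, true); (a, false)].
Proof. by apply; rewrite /= lmeet1r ljoin0r; apply: lle_refl. Qed.

Lemma is_dlhom_prime_filter (g : L -> bool) :
  (forall a b, lle a b -> g a -> g b) ->
  (forall a b, g a -> g b -> g (lmeet a b)) ->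
  (forall a b, g (ljoin a b) -> g a || g b) ->
  g ltop -> ~~ g lbot -> is_dlhom (g : L -> bool_dl).
Proof.
move=> mono meet prime top bot; split=> //=; last exact: negbTE.
- move=> a b; apply/idP/andP => [gab|[]]; last exact: meet.
  by split; apply: mono gab; [apply: lle_meetl|apply: lle_meetr].
- move=> a b; apply/idP/orP => [/prime/orP //|[ga|gb]].
  + exact: mono (lle_joinl a b) ga.
  + exact: mono (lle_joinr a b) gb.
Qed.

Lemma dual_separation a b : ~ lle a b -> exists x : dual L, sval x a && ~~ sval x b.
Proof.
move=> nab.
have [|g [gS g_cons]] := @maximal_assignment _ consistent consistent_incl consistent_ext
  inconsistent_pair (fun p => p = (a, true) \/ p = (b, false)).
  move=> s sS le_s; apply: nab.
  apply: lle_trans (lle_trans le_s _).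
  - by apply: pos_greatest => c /sS [[->]|] //; apply: lle_refl.
  - by apply: neg_least => c /sS [|[->]] //; apply: lle_refl.
have hg : is_dlhom (g : L -> bool_dl).
  apply: is_dlhom_prime_filter.
  - move=> c d cd gcd; apply: contrapT => /negP ngd; apply: (g_cons [:: (c, true); (d, false)]).
      by move=> p [<-|[<-|[]]] //=; apply: negbTE.
    by rewrite /= lmeet1r ljoin0r.
  - move=> c d gc' gd; apply: contrapT => /negP ngcd.
    apply: (g_cons [:: (c, true); (d, true); (lmeet c d, false)]).
      by move=> p [<-|[<-|[<-|[]]]] //=; apply: negbTE.
    by rewrite /= lmeet1r ljoin0r; apply: lle_refl.
  - move=> c d gcd; apply: contrapT => /negP; rewrite negb_or => /andP[ngc ngd].
    apply: (g_cons [:: (ljoin c d, true); (c, false); (d, false)]).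
      by move=> p [<-|[<-|[<-|[]]]] //=; apply: negbTE.
    by rewrite /= lmeet1r ljoin0r; apply: lle_refl.
  - apply: contrapT => /negP ngt; apply: (g_cons [:: (ltop, false)]).
      by move=> p [<-|[]] //=; apply: negbTE.
    by rewrite /= ljoin0r; apply: lle_refl.
  - apply/negP => gb; apply: (g_cons [:: (lbot, true)]).
      by move=> p [<-|[]].
    by rewrite /= lmeet1r; apply: lle_refl.
exists (exist _ (g : L -> bool_dl) hg) => /=.
by rewrite (gS (a, true)) ?(gS (b, false)); [| right | left].
Qed.

Lemma dual_inj a b : (forall x : dual L, sval x a = sval x b) -> a = b.
Proof.
move=> xab; apply: lle_anti; apply: contrapT => /dual_separation[x];
  by rewrite xab andbN.
Qed.

Section Points.
Variable x : dual L.

Lemma dual_meet a b : sval x (lmeet a b) = sval x a && sval x b.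
Proof. exact: (dlhom_meet (svalP x)). Qed.

Lemma dual_join a b : sval x (ljoin a b) = sval x a || sval x b.
Proof. exact: (dlhom_join (svalP x)). Qed.

Lemma dual_mono a b : lle a b -> sval x a -> sval x b.
Proof. by move=> <-; rewrite dual_meet => /andP[]. Qed.

Lemma dual_pos s : (forall a, List.In (a, true) s -> sval x a) -> sval x (pos s).
Proof.
elim: s => [|[a b] s IH] xs /=; first exact: (dlhom_top (svalP x)).
have {}IH := IH (fun a' h => xs a' (or_intror h)).
by case: b xs => // xs; rewrite dual_meet IH andbT; apply: xs; left.
Qed.

Lemma dual_neg s : (forall a, List.In (a, false) s -> ~~ sval x a) -> ~~ sval x (neg s).
Proof.
elim: s => [|[a b] s IH] xs /=; first by rewrite (dlhom_bot (svalP x)).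
have {}IH := IH (fun a' h => xs a' (or_intror h)).
by case: b xs => // xs; rewrite dual_join negb_or IH andbT; apply: xs; left.
Qed.

End Points.

Lemma is_dlhom_finitely_dual (g : L -> bool) :
  (forall s, agrees g s -> exists x : dual L, agrees (sval x) s) -> is_dlhom (g : L -> bool_dl).
Proof.
move=> gx.
have g3 a b c : exists x : dual L, [/\ sval x a = g a, sval x b = g b & sval x c = g c].
  have [|x xs] := gx [:: (a, g a); (b, g b); (c, g c)]; first by move=> p [<-|[<-|[<-|[]]]].
  by exists x; split; apply: (xs (_, _)); [left|right; left|right; right; left].
split=> /= [a b|a b||].
- by have [x [<- <- <-]] := g3 a b (lmeet a b); rewrite dual_meet.
- by have [x [<- <- <-]] := g3 a b (ljoin a b); rewrite dual_join.
- by have [x [<- _ _]] := g3 lbot lbot lbot; rewrite (dlhom_bot (svalP x)).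
- by have [x [<- _ _]] := g3 ltop ltop ltop; rewrite (dlhom_top (svalP x)).
Qed.

Lemma dual_compact (K : dual L -> bool) (S0 : set (L * bool)) :
  dual_open (fun x => ~~ K x) ->
  (forall s, (forall p, List.In p s -> S0 p) -> exists2 x, K x & agrees (sval x) s) ->
  exists2 x, K x & forall p, S0 p -> sval x p.1 = p.2.
Proof.
move=> K_closed S0_fin.
pose P s := exists2 x : dual L, K x & agrees (sval x) s.
have P_incl s t : List.incl s t -> P t -> P s.
  by move=> st [x Kx xt]; exists x => // p /st /xt.
have P_ext s a : P s -> P ((a, true) :: s) \/ P ((a, false) :: s).
  move=> [x Kx xs]; have : agrees (sval x) ((a, sval x a) :: s) by move=> p [<-|/xs].
  by case: (sval x a) => xa; [left|right]; exists x.
have P_contra a : ~ P [:: (a, true); (a, false)].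
  move=> [x _ xs]; have /= := xs (a, true) (or_introl erefl).
  by rewrite (xs (a, false) (or_intror (or_introl erefl))).
have [g [gS gP]] := maximal_assignment P_incl P_ext P_contra S0_fin.
have hg : is_dlhom (g : L -> bool_dl).
  by apply: is_dlhom_finitely_dual => s /gP[x _ xs]; exists x.
exists (exist _ (g : L -> bool_dl) hg) => //.
apply: contraT => /K_closed[F Fx].
have [|x Kx xF] := gP [seq (l, g l) | l <- F].
  by move=> p /List.in_map_iff[l [<- _]].
suff : ~~ K x by rewrite Kx.
by apply: Fx => l lF; apply: (xF (l, g l)); apply/List.in_map_iff; exists l.
Qed.

Section ClopenUpSet.
Variable U : dual L -> bool.
Hypothesis U_up : forall x y, dual_le x y -> U x -> U y.
Hypothesis U_open : dual_open (fun x => U x).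
Hypothesis U_closed : dual_open (fun x => ~~ U x).

Lemma clopen_up_basic x : U x -> exists2 a, sval x a & forall y : dual L, sval y a -> U y.
Proof.
move=> Ux; apply: contrapT => no_a.
have [|s sS|y nUy xy] := @dual_compact (fun y => ~~ U y) (fun p => p.2 /\ sval x p.1).
- by move=> y /negPn Uy; have [F FU] := U_open Uy; exists F => z /FU ->.
- apply: contrapT => nfs; apply: no_a; exists (pos s); first by apply: dual_pos => a /sS[].
  move=> y ys; apply: contrapT => /negP nUy; apply: nfs; exists y => // -[a []] ps.
  + exact: dual_mono (pos_in ps) ys.
  + by case: (sS _ ps).
- move/negP: nUy; apply; apply: U_up Ux => a; apply/implyP => xa.
  exact: (xy (a, true)).
Qed.

Lemma clopen_up_rep : exists a, forall x : dual L, sval x a = U x.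
Proof.
apply: contrapT => no_a.
have [s sS|x Ux xS] :=
  @dual_compact U (fun p => ~~ p.2 /\ forall y : dual L, sval y p.1 -> U y) U_closed.
- apply: contrapT => nfs; apply: no_a; exists (neg s) => x.
  apply/idP/idP => [xs|Ux].
  + apply: contrapT => nUx; move: xs; apply/negP; apply: dual_neg => a a_s.
    apply/negP => xa; apply: nUx; exact: (sS _ a_s).2 x xa.
  + apply: contrapT => /negP nxs; apply: nfs; exists x => // -[a []] ps.
    * by case: (sS _ ps).
    * by apply/negbTE; apply: contra nxs; apply: dual_mono; apply: neg_in.
- have [a xa aU] := clopen_up_basic Ux.
  by move: (xS (a, false) (conj isT aU)); rewrite /= xa.
Qed.

End ClopenUpSet.
End Lattice.

(** * Levels *)

Lemma leq_bigmax_downward m (p : nat -> bool) j :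
  (forall i k, i <= k -> p k -> p i) -> p 0 -> (forall k, m < k -> ~~ p k) ->
  (j <= \max_(i < m.+1 | p i) i) = p j.
Proof.
move=> p_down p0 p_big; case: (boolP (p j)) => pj.
  have jm : j < m.+1 by rewrite ltnNge; apply: contraL pj; exact: p_big.
  exact: (leq_bigmax_cond (Ordinal jm) pj).
have j0 : 0 < j by case: j pj => [|j]; rewrite ?p0.
apply/negbTE; rewrite -ltnNge -(prednK j0) ltnS; apply/bigmax_leqP => i pi.
by rewrite -ltnS prednK // ltnNge; apply: contra pj => /p_down; apply.
Qed.

Lemma ord_geq_inj n (u v : 'I_n.+1) : (forall j, (j <= u) = (j <= v)) -> u = v.
Proof. by move=> uv; apply/val_inj/eqP/eqn_geP. Qed.

Lemma skel_inj n (A : pmv n) (s t : skel A) : sval s = sval t -> s = t.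
Proof. by case: s t => a sa [b sb] /= ab; apply: eq_exist. Qed.

Section Level.
Variables (n : nat) (A : pmv n).
Implicit Types (a b : A) (chi : skel A -> bool).

Definition cut_skel j a : skel A := exist _ (cut j a) (cut_oplus_idem j a).

(* The value, in units of [1/n], of [a] at the point [chi] of the dual of [S(A)]. *)
Definition level chi a : 'I_n.+1 := inord (\max_(j < n.+1 | chi (cut_skel j a)) j).

Lemma level_ext chi chi' a :
  (forall j, j <= n -> chi (cut_skel j a) = chi' (cut_skel j a)) -> level chi a = level chi' a.
Proof. by move=> e; congr inord; apply: eq_bigl => j; apply: e; rewrite -ltnS. Qed.

Section SkelHom.
Variables (chi : skel A -> bool) (chi_hom : is_skelhom (chi : skel A -> bool_dl)).

Lemma chi_meet s t : chi (skel_meet s t) = chi s && chi t.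
Proof. exact: skelhom_meet chi_hom s t. Qed.

Lemma chi_join s t : chi (skel_join s t) = chi s || chi t.
Proof. exact: skelhom_join chi_hom s t. Qed.

Lemma chi_mono s t : pmv_le (sval s) (sval t) -> chi s -> chi t.
Proof.
move=> st; have <- : skel_meet s t = s by exact: skel_inj.
by rewrite chi_meet => /andP[].
Qed.

Lemma chi_cut_gt j a : n < j -> chi (cut_skel j a) = false.
Proof.
move=> nj; have -> : cut_skel j a = skel_bot A by apply: skel_inj; exact: cut_gt.
exact: (skelhom_bot chi_hom).
Qed.

Lemma leq_level j a : (j <= level chi a) = chi (cut_skel j a).
Proof.
rewrite /level inordK; last by rewrite ltnS; apply/bigmax_leqP => i _; rewrite -ltnS.
apply: (leq_bigmax_downward (p := fun j => chi (cut_skel j a))).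
- by move=> i k ik; apply/chi_mono/cut_antitone.
- have -> : cut_skel 0 a = skel_top A by exact: skel_inj.
  exact: (skelhom_top chi_hom).
- by move=> k nk; rewrite chi_cut_gt.
Qed.

Lemma chi_cut_binop (op : A -> A -> A) c a b j :
  (forall p q, j + c <= p + q -> pmv_le (pmin (cut p a) (cut q b)) (cut j (op a b))) ->
  (forall p q, p + q <= j + c + 1 -> pmv_le (cut j (op a b)) (pmax (cut p a) (cut q b))) ->
  chi (cut_skel j (op a b)) = (j + c <= level chi a + level chi b).
Proof.
move=> lower upper; case: leqP => hj.
  apply: (chi_mono (s := skel_meet (cut_skel (level chi a) a) (cut_skel (level chi b) b))).
    exact: lower.
  by rewrite chi_meet -!leq_level !leqnn.
apply/negbTE/negP => cj.
have /upper up : (level chi a).+1 + (level chi b).+1 <= j + c + 1 by lia.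
have := @chi_mono (cut_skel j (op a b)) (skel_join (cut_skel _ a) (cut_skel _ b)) up cj.
by rewrite chi_join -!leq_level !ltnn.
Qed.

Lemma level_skel s : level chi (sval s) = if chi s then ord_max else ord0.
Proof.
apply: ord_geq_inj => j; rewrite leq_level.
case: (posnP j) => [->|j0]; first by rewrite -leq_level.
case: (leqP j n) => [jn|nj]; last by rewrite chi_cut_gt //; case: (chi s) => /=; lia.
have -> : cut_skel j (sval s) = s by apply: skel_inj; apply: cut_fix_idem (svalP s) _; rewrite j0.
by case: (chi s) => /=; lia.
Qed.

Lemma level_pmvhom : is_pmvhom (level chi : A -> PL n).
Proof.
split=> [a b|a b|a b|a b||]; try apply: ord_geq_inj => j.
- rewrite leq_level (_ : cut_skel j _ = skel_meet (cut_skel j a) (cut_skel j b)).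
    by rewrite chi_meet -!leq_level pl_minE leq_min.
  exact/skel_inj/cut_min.
- rewrite leq_level (_ : cut_skel j _ = skel_join (cut_skel j a) (cut_skel j b)).
    by rewrite chi_join -!leq_level pl_maxE leq_max.
  exact/skel_inj/cut_max.
- rewrite leq_level pl_odotE; case: (posnP j) => [->|j0]; first by rewrite -leq_level.
  rewrite (@chi_cut_binop podot n) => [|p q|p q]; first lia.
  + exact: cut_odot_lower.
  + by move=> pq; apply: cut_odot_upper => //; lia.
- rewrite leq_level pl_oplusE; case: (posnP j) => [->|j0]; first by rewrite -leq_level.
  case: (leqP j n) => [jn|nj]; last by rewrite chi_cut_gt //; lia.
  rewrite (@chi_cut_binop poplus 0) => [|p q|p q]; first lia.
  + by move=> pq; apply: cut_oplus_lower => //; lia.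
  + by move=> pq; apply: cut_oplus_upper => //; lia.
- by rewrite (level_skel (skel_bot A)) (skelhom_bot chi_hom).
- by rewrite (level_skel (skel_top A)) (skelhom_top chi_hom).
Qed.
End SkelHom.
End Level.

Lemma In_map (T1 : eqType) T2 (f : T1 -> T2) x s : x \in s -> List.In (f x) (map f s).
Proof. by elim: s => //= y s IH; rewrite inE => /orP[/eqP ->|/IH]; [left|right]. Qed.

Section MaxFiber.
Variables (n : nat) (n_gt0 : 0 < n) (A : pmv n) (psi : A -> PL n).
Hypothesis psi_hom : is_pmvhom psi.

Lemma skelhom_eq_max : is_skelhom ((fun s => psi (sval s) == ord_max) : skel A -> bool_dl).
Proof.
case: psi_hom => hmin hmax _ _ hzero hone.
split=> [s t|s t||] /=; rewrite ?hmin ?hmax ?hzero ?hone !ord_max_geq //=.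
- by rewrite pl_minE leq_min.
- by rewrite pl_maxE leq_max.
- by rewrite leqn0 eqn0Ngt n_gt0.
- by rewrite leqnn.
Qed.

Lemma level_eq_max a : level (fun s => psi (sval s) == ord_max) a = psi a.
Proof.
apply: ord_geq_inj => j; rewrite (leq_level skelhom_eq_max) /= (pmvhom_cut psi_hom) cut_PL.
by case: (j <= psi a); rewrite ord_max_geq /= ?leqnn // leqn0 eqn0Ngt n_gt0.
Qed.

End MaxFiber.

Lemma level_natural n (A A' : pmv n) (g : A' -> A) (hg : is_pmvhom g) chi a' :
  level chi (g a') = level (fun s => chi (skel_map hg s)) a'.
Proof.
by congr inord; apply: eq_bigl => j; congr chi; apply: skel_inj; rewrite /= (pmvhom_cut hg).
Qed.

(** * The adjunction *)

Lemma is_skelhom_at n (A : pmv n) (L : dl) (h : skel A -> L) (x : dual L) :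
  is_skelhom h -> is_skelhom ((fun s => sval x (h s)) : skel A -> bool_dl).
Proof.
case=> hmeet hjoin hbot htop; case: (svalP x) => xmeet xjoin xbot xtop.
by split=> [s t|s t||]; rewrite ?hmeet ?hjoin ?hbot ?htop.
Qed.

Lemma is_pmvhom_at n (A : pmv n) (L : dl) (phi : A -> dual L -> 'I_n.+1) (x : dual L) :
  is_phom phi -> is_pmvhom ((fun a => phi a x) : A -> PL n).
Proof. by case=> _ hmin hmax hodot hoplus hzero hone; split. Qed.

Section Adjunction.
Variables (n : nat) (n_gt0 : 0 < n) (A : pmv n) (L : dl).

Definition power_transpose (h : skel A -> L) (a : A) (x : dual L) : 'I_n.+1 :=
  level (fun s => sval x (h s)) a.

(* Well defined by the representation of clopen up-sets of [D(L)]; the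
   default [lbot] is only used when [phi] is not a homomorphism. *)
Definition skel_transpose (phi : A -> dual L -> 'I_n.+1) (s : skel A) : L :=
  epsilon (inhabits lbot)
    (fun l => forall x : dual L, sval x l = (phi (sval s) x == ord_max)).

Lemma power_transpose_phom h : is_skelhom h -> is_phom (power_transpose h).
Proof.
move=> hh; have lh x := level_pmvhom (is_skelhom_at x hh).
split=> [a|a b x|a b x|a b x|a b x|x|x]; last 6 first.
- exact: pmvhom_min (lh x) a b.
- exact: pmvhom_max (lh x) a b.
- exact: pmvhom_odot (lh x) a b.
- exact: pmvhom_oplus (lh x) a b.
- exact: pmvhom_zero (lh x).
- exact: pmvhom_one (lh x).
split=> [V x Vx|x y xy].
- exists [seq h (cut_skel j a) | j <- iota 0 n.+1] => y yx.
  suff -> : power_transpose h a y = power_transpose h a x by [].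
  apply: level_ext => j jn; apply: yx.
  by apply: (In_map (fun j => h (cut_skel j a))); rewrite mem_iota.
- have := leqnn (power_transpose h a x).
  rewrite {2}/power_transpose (leq_level (is_skelhom_at x hh)) => /(implyP (xy _)).
  by rewrite -(leq_level (is_skelhom_at y hh)).
Qed.

Section SkelTranspose.
Variables (phi : A -> dual L -> 'I_n.+1) (phi_hom : is_phom phi).

Lemma skel_transposeE s x : sval x (skel_transpose phi s) = (phi (sval s) x == ord_max).
Proof.
move: x; apply: (epsilon_spec (inhabits lbot)
  (fun l => forall x : dual L, sval x l = (phi (sval s) x == ord_max))).
have [cont mono] := phom_in phi_hom (sval s).
apply: clopen_up_rep; last 2 first.
- exact: cont (fun w => is_true (w == ord_max)).
- exact: cont (fun w => is_true (w != ord_max)).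
move=> x y /mono xy; rewrite !ord_max_geq => /leq_trans; apply; exact: xy.
Qed.

Lemma skel_transpose_skelhom : is_skelhom (skel_transpose phi).
Proof.
have sh x := skelhom_eq_max n_gt0 (is_pmvhom_at x phi_hom).
split=> [s t|s t||]; apply: dual_inj => x.
- by rewrite dual_meet !skel_transposeE (skelhom_meet (sh x)).
- by rewrite dual_join !skel_transposeE (skelhom_join (sh x)).
- by rewrite (dlhom_bot (svalP x)) skel_transposeE (skelhom_bot (sh x)).
- by rewrite (dlhom_top (svalP x)) skel_transposeE (skelhom_top (sh x)).
Qed.

Lemma power_transposeK a x : power_transpose (skel_transpose phi) a x = phi a x.
Proof.
rewrite /power_transpose -(level_eq_max n_gt0 (is_pmvhom_at x phi_hom)).
by apply: level_ext => j _; rewrite skel_transposeE.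
Qed.
End SkelTranspose.

Lemma skel_transposeK h s : is_skelhom h -> skel_transpose (power_transpose h) s = h s.
Proof.
move=> hh; apply: dual_inj => x.
rewrite skel_transposeE; last exact: power_transpose_phom.
rewrite /power_transpose (level_skel (is_skelhom_at x hh)).
by case: (sval x (h s)); rewrite ord_max_geq /= ?leqnn // leqn0 eqn0Ngt n_gt0.
Qed.
End Adjunction.

Lemma power_transpose_natural n (A A' : pmv n) (g : A' -> A) (hg : is_pmvhom g)
  (L L' : dl) (f : L -> L') (hf : is_dlhom f) (h : skel A -> L) a' x' :
  power_transpose (fun s => f (h (skel_map hg s))) a' x'
  = power_transpose h (g a') (dual_map hf x').
Proof. by rewrite /power_transpose level_natural. Qed.

Theorem theorem4p7 (n : nat) : (0 < n)%N ->
  exists (Phi : forall (A : pmv n) (L : dl), (skel A -> L) -> A -> dual L -> 'I_n.+1)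
         (Psi : forall (A : pmv n) (L : dl), (A -> dual L -> 'I_n.+1) -> skel A -> L),
    [/\ (forall A L h, is_skelhom h -> is_phom (Phi A L h)),
        (forall A L phi, is_phom phi -> is_skelhom (Psi A L phi)),
        (forall A L h, is_skelhom h -> forall s, Psi A L (Phi A L h) s = h s),
        (forall A L phi, is_phom phi ->
           forall a x, Phi A L (Psi A L phi) a x = phi a x)
      & forall (A A' : pmv n) (g : A' -> A) (hg : is_pmvhom g)
               (L L' : dl) (f : L -> L') (hf : is_dlhom f)
               (h : skel A -> L), is_skelhom h ->
          forall (a' : A') (x' : dual L'),
            Phi A' L' (fun s => f (h (skel_map hg s))) a' x'
            = Phi A L h (g a') (dual_map hf x')].
Proof.
move=> n_gt0.
exists (@power_transpose n), (@skel_transpose n); split.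
- by move=> A L h; apply: power_transpose_phom.
- by move=> A L phi; apply: skel_transpose_skelhom.
- by move=> A L h hh s; apply: skel_transposeK.
- by move=> A L phi hphi a x; apply: power_transposeK.
- by move=> A A' g hg L L' f hf h _ a' x'; apply: power_transpose_natural.
Qed.
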